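(* Let $\mathbb{R}^{Nn\times Nn}_{s*}$ be the space of fourth-order tensors $\Xi=(\Xi_{\alpha i\beta j})$ ($\alpha,\beta\in\{1,\dots,N\}$, $i,j\in\{1,\dots,n\}$) satisfying $\Xi_{\alpha i\beta j}=\Xi_{\beta j\alpha i}=\Xi_{\beta i\alpha j}$. Then the relation $\Xi\le_\otimes\Theta$ is a partial ordering on $\mathbb{R}^{Nn\times Nn}_{s*}$ (reflexive, transitive and antisymmetric).
   Context: For fourth-order tensors, $\Xi\le_\otimes\Theta$ means $(\Theta-\Xi)_{\alpha i\beta j}\eta_\alpha w_i\eta_\beta w_j\ge0$ for all $\eta\in\mathbb{R}^N$ and $w\in\mathbb{R}^n$ (summation over repeated indices). *)

From mathcomp Require Import all_boot all_order all_algebra.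
Set Implicit Arguments. Unset Strict Implicit. Unset Printing Implicit Defensive.
Import Order.TTheory GRing.Theory Num.Theory.
Local Open Scope ring_scope.

Definition tensor4 (R : Type) (N n : nat) := 'I_N -> 'I_n -> 'I_N -> 'I_n -> R.

Definition sym_star (R : Type) (N n : nat) (X : tensor4 R N n) : Prop :=
  forall (a : 'I_N) (i : 'I_n) (b : 'I_N) (j : 'I_n),
    X a i b j = X b j a i /\ X b j a i = X b i a j.

Definition le_otimes (R : realFieldType) (N n : nat) (X Y : tensor4 R N n) : Prop :=
  forall (eta : 'I_N -> R) (w : 'I_n -> R),
    0 <= \sum_(a < N) \sum_(i < n) \sum_(b < N) \sum_(j < n)
           (Y a i b j - X a i b j) * eta a * w i * eta b * w j.

(** Writing [q_X(eta, w)] for the quartic form of [X], the relation [X <=_otimes Y]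
    says [q_X <= q_Y] pointwise, so it is a preorder.  For antisymmetry, [D := Y - X]
    lies in the symmetry class and has [q_D = 0].  For fixed [w], [q_D] is the
    quadratic form in [eta] of a symmetric matrix, which therefore vanishes by
    polarization; each entry of that matrix is in turn a quadratic form in [w]
    with symmetric coefficients [(i, j) |-> D a i b j], so [D = 0]. *)
From mathcomp Require Import all_boot all_order all_algebra.
From mathcomp Require Import reals.
From mathcomp Require Import ring.
From Stdlib Require Import FunctionalExtensionality.
Import Order.TTheory GRing.Theory Num.Theory.
Local Open Scope ring_scope.

Section Polarization.
Variables (R : numFieldType) (I : finType).

Lemma sum_indicator_mulr (c : I) (G : I -> R) :
  \sum_x (x == c)%:R * G x = G c.
Proof.
rewrite (bigD1 c) //= eqxx mul1r big1 ?addr0 // => x /negbTE ->.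
by rewrite mul0r.
Qed.

Lemma sum_indicator2_mulr (c d : I) (G : I -> R) :
  \sum_x ((x == c)%:R + (x == d)%:R) * G x = G c + G d.
Proof.
under eq_bigr do rewrite mulrDl.
by rewrite big_split /= !sum_indicator_mulr.
Qed.

Lemma quad_form_eq0 (F : I -> I -> R) :
  (forall x y, F x y = F y x) ->
  (forall u : I -> R, \sum_x \sum_y u x * u y * F x y = 0) ->
  forall x y, F x y = 0.
Proof.
move=> Fsym q0.
have q_indicator2 c d : (F c c + F c d) + (F d c + F d d) = 0.
  have := q0 (fun x => (x == c)%:R + (x == d)%:R).
  under eq_bigr do (under eq_bigr do rewrite -mulrA;
                    rewrite -mulr_sumr sum_indicator2_mulr).
  by rewrite sum_indicator2_mulr.
have Fdiag c : F c c = 0.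
  have := q_indicator2 c c; rewrite -!mulr2n -mulrnA => /eqP.
  by rewrite mulrn_eq0 => /eqP.
move=> x y; have := q_indicator2 x y.
rewrite !Fdiag add0r addr0 (Fsym y x) => /eqP.
by rewrite -mulr2n mulrn_eq0 => /eqP.
Qed.

End Polarization.

Section QuarticForm.
Variables (R : realFieldType) (N n : nat).
Implicit Types (X Y D : tensor4 R N n) (eta : 'I_N -> R) (w : 'I_n -> R).

Definition tensor_form D eta w : R :=
  \sum_(a < N) \sum_(i < n) \sum_(b < N) \sum_(j < n)
    D a i b j * eta a * w i * eta b * w j.

Lemma tensor_formB X Y eta w :
  tensor_form (fun a i b j => Y a i b j - X a i b j) eta w =
  tensor_form Y eta w - tensor_form X eta w.
Proof.
rewrite /tensor_form -sumrB; apply: eq_bigr => a _.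
rewrite -sumrB; apply: eq_bigr => i _.
rewrite -sumrB; apply: eq_bigr => b _.
by rewrite -sumrB; apply: eq_bigr => j _; rewrite !mulrBl.
Qed.

Lemma le_otimesP X Y :
  le_otimes X Y <-> forall eta w, tensor_form X eta w <= tensor_form Y eta w.
Proof.
split=> XY eta w.
  by rewrite -subr_ge0 -tensor_formB; exact: XY.
by have := XY eta w; rewrite -subr_ge0 -tensor_formB.
Qed.

Lemma tensor_form_pairs D eta w :
  tensor_form D eta w =
  \sum_(a < N) \sum_(b < N) eta a * eta b *
    (\sum_(i < n) \sum_(j < n) w i * w j * D a i b j).
Proof.
apply: eq_bigr => a _; rewrite exchange_big /=; apply: eq_bigr => b _.
rewrite mulr_sumr; apply: eq_bigr => i _.
rewrite mulr_sumr; apply: eq_bigr => j _.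
by ring.
Qed.

Lemma tensor4_ext X Y :
  (forall a i b j, X a i b j = Y a i b j) -> X = Y.
Proof.
move=> XY; apply: functional_extensionality => a.
apply: functional_extensionality => i; apply: functional_extensionality => b.
exact: functional_extensionality.
Qed.

Lemma sym_star_swap_greek {D} :
  sym_star D -> forall a i b j, D a i b j = D b i a j.
Proof. by move=> sD a i b j; case: (sD a i b j) => -> ->. Qed.

Lemma sym_star_swap_latin {D} :
  sym_star D -> forall a i b j, D a i b j = D a j b i.
Proof.
move=> sD a i b j; rewrite (sym_star_swap_greek sD).
by case: (sD a j b i) => <-.
Qed.

Lemma sym_starB X Y :
  sym_star X -> sym_star Y -> sym_star (fun a i b j => Y a i b j - X a i b j).
Proof.
by move=> sX sY a i b j; case: (sX a i b j) => -> ->; case: (sY a i b j) => -> ->.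
Qed.

Lemma sym_star_form_eq0 D :
  sym_star D -> (forall eta w, tensor_form D eta w = 0) ->
  forall a i b j, D a i b j = 0.
Proof.
move=> sD q0.
have pair_form0 w a b : \sum_(i < n) \sum_(j < n) w i * w j * D a i b j = 0.
  apply: (@quad_form_eq0 _ _
    (fun a b => \sum_(i < n) \sum_(j < n) w i * w j * D a i b j)).
  - move=> x y; apply: eq_bigr => i _; apply: eq_bigr => j _.
    by rewrite (sym_star_swap_greek sD).
  - by move=> eta; rewrite -tensor_form_pairs q0.
move=> a i b j; apply: (@quad_form_eq0 _ _ (fun i j => D a i b j)) => // x y.
exact: (sym_star_swap_latin sD).
Qed.

Lemma sym_star_form_inj X Y :
  sym_star X -> sym_star Y ->
  (forall eta w, tensor_form X eta w = tensor_form Y eta w) -> X = Y.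
Proof.
move=> sX sY XY.
pose D := fun a i b j => Y a i b j - X a i b j.
have D0 : forall a i b j, D a i b j = 0.
  apply: sym_star_form_eq0; first exact: sym_starB.
  by move=> eta w; rewrite /D tensor_formB XY subrr.
apply: tensor4_ext => a i b j.
by apply/eqP; rewrite eq_sym -subr_eq0 -/(D a i b j) D0.
Qed.

End QuarticForm.

Theorem corollary3 (R : realType) (N n : nat) :
  (forall X : tensor4 R N n, sym_star X -> le_otimes X X) /\
  (forall X Y Z : tensor4 R N n, sym_star X -> sym_star Y -> sym_star Z ->
     le_otimes X Y -> le_otimes Y Z -> le_otimes X Z) /\
  (forall X Y : tensor4 R N n, sym_star X -> sym_star Y ->
     le_otimes X Y -> le_otimes Y X -> X = Y).
Proof.
split; [|split].
- by move=> X _; apply/le_otimesP.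
- move=> X Y Z _ _ _ /le_otimesP XY /le_otimesP YZ.
  by apply/le_otimesP => eta w; exact: le_trans (XY eta w) (YZ eta w).
- move=> X Y sX sY /le_otimesP XY /le_otimesP YX.
  by apply: sym_star_form_inj => // eta w; apply/eqP; rewrite eq_le XY YX.
Qed.
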